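(* Let $m\geq\beta\geq 1$ be integers and let $G^*$ be a graph with maximum $q$ among all graphs in $\mathfrak{G}_{m,\geq\beta}$. Let $X^*$ be a principal eigenvector of $Q(G^* )$ with coordinates $x^*_v$, let $M^*(G^* )$ be a matching of $G^*$ extremal to $X^*$, and let $u_1v_1,\ldots,u_kv_k$ ($k=\beta(G^* )$) be an ordering of $M^*(G^* )$ proper to $X^*$. Let $E_1=M^*(G^* )\cup\{v_1v : v\in N_{G^*}(v_1)\}$ and $E_2=E(G^* )\setminus E_1$. If $E_2\neq\emptyset$, then either $u_1v_2,\,u_2v_1,\,v_1v_2\in E(G^* )$ (so $G^*$ contains the graph $H_1$ on $\{u_1,v_1,u_2,v_2\}$ with edges $u_1v_1,u_2v_2,u_1v_2,u_2v_1,v_1v_2$), or $k\geq 3$ and $v_1v_2,\,v_2v_3,\,v_1v_3\in E(G^* )$ (so $G^*$ contains the graph $H_2$ on $\{u_1,v_1,u_2,v_2,u_3,v_3\}$ with edges $u_1v_1,u_2v_2,u_3v_3,v_1v_2,v_2v_3,v_1v_3$).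
   Context: All graphs are finite, simple and undirected (isolated vertices allowed). $Q(G)=D(G)+A(G)$ is the signless Laplacian matrix and $q(G)$ its largest eigenvalue; a principal eigenvector of $Q(G)$ is a nonnegative unit vector $X$ with $Q(G)X=q(G)X$. $\beta(G)$ is the matching number. $\mathfrak{G}_{m,\geq\beta}$ is the set of graphs with exactly $m$ edges and matching number at least $\beta$. For a graph $G$ with at least one edge and a principal eigenvector $X$ (coordinates $x_v$), a matching $M^*(G)$ is extremal to $X$ if it is a maximum matching and $\sum_{uv\in M^*(G)}(x_u+x_v)^2=\max_M\sum_{uv\in M}(x_u+x_v)^2$ over all maximum matchings $M$. An ordering $u_1v_1,\ldots,u_kv_k$ of the edges of $M^*(G^* )$ (with a designated labelling of the endpoints of each edge) is proper to $X^*$ if for each $i$: (i) $x^*_{v_i}\geq x^*_{u_i}$; (ii) $x^*_{v_i}\geq x^*_{v_{i+1}}$ (for $i<k$); (iii) $x^*_{u_i}\geq x^*_{u_{i+1}}$ whenever $x^*_{v_i}=x^*_{v_{i+1}}$ (for $i<k$). *)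

From mathcomp Require Import all_boot all_order all_algebra.
From mathcomp Require Import reals.
Set Implicit Arguments. Unset Strict Implicit. Unset Printing Implicit Defensive.
Import Order.TTheory GRing.Theory Num.Theory.
Local Open Scope ring_scope.

Definition simple_graph (n : nat) (adj : rel 'I_n) : Prop :=
  symmetric adj /\ irreflexive adj.

Definition is_edge (n : nat) (adj : rel 'I_n) (e : {set 'I_n}) : bool :=
  [exists x, exists y, adj x y && (e == [set x; y])].

Definition edges (n : nat) (adj : rel 'I_n) : {set {set 'I_n}} :=
  [set e | is_edge adj e].

Definition nedges (n : nat) (adj : rel 'I_n) : nat := #|edges adj|.

Definition nbhd (n : nat) (adj : rel 'I_n) (v : 'I_n) : {set 'I_n} :=
  [set w | adj v w].
Definition deg (n : nat) (adj : rel 'I_n) (v : 'I_n) : nat := #|nbhd adj v|.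

Definition is_matching (n : nat) (adj : rel 'I_n) (M : {set {set 'I_n}}) : bool :=
  (M \subset edges adj) &&
  [forall e1 in M, forall e2 in M, (e1 != e2) ==> [disjoint e1 & e2]].

Definition matching_number (n : nat) (adj : rel 'I_n) : nat :=
  \max_(M : {set {set 'I_n}} | is_matching adj M) #|M|.

Definition is_max_matching (n : nat) (adj : rel 'I_n) (M : {set {set 'I_n}}) : bool :=
  is_matching adj M && (#|M| == matching_number adj).

Definition signless_laplacian (R : realType) (n : nat) (adj : rel 'I_n) : 'M[R]_n :=
  \matrix_(i, j) ((i == j)%:R * (deg adj i)%:R + (adj i j)%:R).

Definition is_q (R : realType) (n : nat) (adj : rel 'I_n) (r : R) : Prop :=
  eigenvalue (signless_laplacian R adj) r /\
  forall a : R, eigenvalue (signless_laplacian R adj) a -> a <= r.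

Definition principal_eigenvector (R : realType) (n : nat) (adj : rel 'I_n)
    (r : R) (X : 'cV[R]_n) : Prop :=
  (forall i, 0 <= X i 0) /\ \sum_i (X i 0) ^+ 2 = 1 /\
  signless_laplacian R adj *m X = r *: X.

Definition mweight (R : realType) (n : nat) (X : 'cV[R]_n) (M : {set {set 'I_n}}) : R :=
  \sum_(e in M) (\sum_(v in e) X v 0) ^+ 2.

Definition extremal_matching (R : realType) (n : nat) (adj : rel 'I_n)
    (X : 'cV[R]_n) (M : {set {set 'I_n}}) : Prop :=
  is_max_matching adj M /\
  forall M', is_max_matching adj M' -> mweight X M' <= mweight X M.

(* (u i, v i), i < k (0-based), is an ordering of M proper to X *)
Definition proper_ordering (R : realType) (n : nat) (X : 'cV[R]_n)
    (M : {set {set 'I_n}}) (k : nat) (u v : 'I_k -> 'I_n) : Prop :=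
  injective (fun i => [set u i; v i]) /\
  [set [set u i; v i] | i : 'I_k] = M /\
  (forall i, X (u i) 0 <= X (v i) 0) /\
  (forall i j : 'I_k, j = i.+1 :> nat -> X (v j) 0 <= X (v i) 0) /\
  (forall i j : 'I_k, j = i.+1 :> nat -> X (v i) 0 = X (v j) 0 ->
      X (u j) 0 <= X (u i) 0).

(* Rotation: let G' = G - ab + cd for an edge ab and a non-edge cd of G. If a
   matching of size beta(G) survives in G', then G' lies in the class, so by the
   Rayleigh principle q(G) >= q(G') >= X^T Q(G') X = q(G) - (x_a + x_b)^2 +
   (x_c + x_d)^2; equality is impossible when x_c + x_d > 0, since the
   eigen-equation of X at c would change by x_c + x_d. So x_c + x_d < x_a + x_b.
   Together with the extremality of M* and the proper ordering, rotations make v_1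
   the heaviest vertex and bound every vertex other than u_1, v_1 by x_(v_2), and
   every vertex outside the first two matching edges by x_(u_1) when k = 2 and
   by x_(v_3) otherwise. An edge ab of E_2 avoids v_1 and M*, so it can be
   rotated onto any missing pair among v_1v_2, u_1v_2, v_1v_3, v_2v_3; comparing
   weights shows that v_1v_2 is an edge, and that if u_1v_2 is not, then k >= 3
   and v_1v_3, v_2v_3 are edges. If u_1v_2 is an edge, so is u_2v_1: otherwise
   rotating u_2v_2 onto v_1u_2 would give x_(v_1) < x_(v_2). *)

From mathcomp Require Import all_boot all_order all_algebra.
From mathcomp Require Import reals perm.
From mathcomp Require classical_sets.
From mathcomp Require Import ring lra zify.
Import Order.TTheory GRing.Theory Num.Theory.
Local Open Scope ring_scope.
Set Implicit Arguments. Unset Strict Implicit. Unset Printing Implicit Defensive.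

Section RayleighPrinciple.
Variables (R : realType) (n : nat).
Implicit Types (A B : 'M[R]_n) (y z : 'I_n -> R).

Definition sym_mx A := forall i j, A i j = A j i.
Definition mxv A y i := \sum_j A i j * y j.
Definition bilin A y z := \sum_i \sum_j y i * A i j * z j.
Definition quad A y := bilin A y y.
Definition sqnorm y := \sum_i y i ^+ 2.
Definition mx_l1norm A := \sum_i \sum_j `|A i j|.

Lemma bilinE A y z : bilin A y z = \sum_i y i * mxv A z i.
Proof.
apply: eq_bigr => i _; rewrite /mxv mulr_sumr.
by apply: eq_bigr => j _; rewrite mulrA.
Qed.

Lemma bilinC A y z : sym_mx A -> bilin A y z = bilin A z y.
Proof.
move=> sA; rewrite /bilin exchange_big.
by apply: eq_bigr => i _; apply: eq_bigr => j _; rewrite sA; ring.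
Qed.

Lemma quadD A y z t : sym_mx A ->
  quad A (fun i => y i + t * z i) = quad A y + 2 * t * bilin A y z + t ^+ 2 * quad A z.
Proof.
move=> sA; have -> : 2 * t * bilin A y z = t * bilin A y z + t * bilin A z y.
  by rewrite [bilin A z y]bilinC //; ring.
rewrite /quad /bilin !mulr_sumr -!big_split /=; apply: eq_bigr => i _.
by rewrite !mulr_sumr -!big_split /=; apply: eq_bigr => j _; ring.
Qed.

Lemma sqnorm_ge0 y : 0 <= sqnorm y.
Proof. by apply: sumr_ge0 => i _; rewrite sqr_ge0. Qed.

Lemma sqnorm_eq0 y : sqnorm y = 0 -> forall i, y i = 0.
Proof.
move/eqP; rewrite psumr_eq0 => [/allP y0 i|i _]; last exact: sqr_ge0.
by apply/eqP; rewrite -sqrf_eq0 -[_ == _]implyTb y0 ?mem_index_enum.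
Qed.

Lemma sqnorm1 : sqnorm (fun=> 1) = n%:R.
Proof.
by rewrite /sqnorm (eq_bigr (fun=> 1)) => [|i _]; rewrite ?expr1n // sumr_const card_ord.
Qed.

Lemma sqr_le_sqnorm y i : y i ^+ 2 <= sqnorm y.
Proof. by rewrite /sqnorm (bigD1 i) //= lerDl sumr_ge0 // => j _; rewrite sqr_ge0. Qed.

Lemma quad_sqnorm0 A y : sqnorm y = 0 -> quad A y = 0.
Proof.
move=> y0; rewrite /quad /bilin big1 // => i _; rewrite big1 // => j _.
by rewrite (sqnorm_eq0 y0 i) !mul0r.
Qed.

Lemma psd_cauchy_schwarz A y z : sym_mx A -> (forall w, 0 <= quad A w) ->
  bilin A y z ^+ 2 <= quad A y * quad A z.
Proof.
move=> sA psdA; set a := quad A z; set b := bilin A y z; set c := quad A y.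
have nonneg t : 0 <= c + 2 * t * b + t ^+ 2 * a by rewrite -quadD.
have a0 : 0 <= a := psdA z; have c0 : 0 <= c := psdA y.
have [a0'|a_neq0] := eqVneq a 0.
  have [->|b_neq0] := eqVneq b 0; first by rewrite expr0n mulr_ge0.
  have := nonneg (- (c + 1) / (2 * b)); rewrite a0' mulr0 addr0.
  have -> : 2 * (- (c + 1) / (2 * b)) * b = - (c + 1) by field.
  lra.
have a_gt0 : 0 < a by rewrite lt_def a_neq0.
have := nonneg (- b / a).
have -> : c + 2 * (- b / a) * b + (- b / a) ^+ 2 * a = c - b ^+ 2 / a by field.
by rewrite subr_ge0 ler_pdivrMr // mulrC.
Qed.

Lemma mxv_scalar_sub (mu : R) A y i : mxv (mu%:M - A) y i = mu * y i - mxv A y i.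
Proof.
rewrite /mxv (eq_bigr (fun j => mu *+ (i == j) * y j - A i j * y j)); last first.
  by move=> j _; rewrite !mxE mulrBl.
rewrite sumrB (bigD1 i) //= eqxx mulr1n big1 ?addr0 // => j /negbTE.
by rewrite eq_sym => ->; rewrite mul0r.
Qed.

Lemma quad_scalar_sub (mu : R) A y : quad (mu%:M - A) y = mu * sqnorm y - quad A y.
Proof.
rewrite /quad !bilinE /sqnorm mulr_sumr -sumrB; apply: eq_bigr => i _.
by rewrite mxv_scalar_sub; ring.
Qed.

Lemma sym_mx_scalar_sub (mu : R) A : sym_mx A -> sym_mx (mu%:M - A).
Proof. by move=> sA i j; rewrite !mxE sA eq_sym. Qed.

Lemma mx_l1norm_ge0 A : 0 <= mx_l1norm A.
Proof. by apply: sumr_ge0 => i _; apply: sumr_ge0. Qed.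

Lemma quad_le_l1norm A y : quad A y <= mx_l1norm A * sqnorm y.
Proof.
have absM_le i j : `|y i| * `|y j| <= sqnorm y.
  have := sqr_le_sqnorm y i; have := sqr_le_sqnorm y j.
  rewrite -[y i ^+ 2]real_normK ?num_real // -[y j ^+ 2]real_normK ?num_real //.
  by have := sqr_ge0 (`|y i| - `|y j|); rewrite sqrrB; lra.
rewrite mulr_suml; apply: ler_sum => i _; rewrite mulr_suml; apply: ler_sum => j _.
rewrite (le_trans (ler_norm _)) // !normrM mulrAC mulrC ler_wpM2l //.
Qed.

Lemma psd_unitmx_sqnorm_le B : sym_mx B -> (forall w, 0 <= quad B w) ->
  B \in unitmx -> forall y, sqnorm y <= mx_l1norm (invmx B) * quad B y.
Proof.
move=> sB psdB uB y; pose z := mxv (invmx B) y.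
have Bz i : mxv B z i = y i.
  transitivity (\sum_k (B *m invmx B) i k * y k); last first.
    rewrite mulmxV // (bigD1 i) //= big1 ?addr0 => [|k]; first by rewrite mxE eqxx mul1r.
    by rewrite mxE eq_sym => /negbTE ->; rewrite mul0r.
  rewrite /mxv /z /mxv (eq_bigr (fun j => \sum_k B i j * invmx B j k * y k)).
    by rewrite exchange_big; apply: eq_bigr => k _; rewrite mxE mulr_suml.
  by move=> j _; rewrite mulr_sumr; apply: eq_bigr => k _; rewrite mulrA.
have yz : bilin B y z = sqnorm y.
  by rewrite bilinE; apply: eq_bigr => i _; rewrite Bz.
have zz : quad B z = quad (invmx B) y.
  rewrite /quad bilinE (eq_bigr (fun i => z i * y i)) => [|i _]; last by rewrite Bz.
  rewrite /bilin; apply: eq_bigr => i _; rewrite /z /mxv mulr_suml.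
  by apply: eq_bigr => j _; ring.
have := psd_cauchy_schwarz y z sB psdB; rewrite yz zz => cs.
have [->|y_neq0] := eqVneq (sqnorm y) 0; first by rewrite mulr_ge0 ?mx_l1norm_ge0.
have y_gt0 : 0 < sqnorm y by rewrite lt_def y_neq0 sqnorm_ge0.
rewrite -(ler_pM2r y_gt0) -expr2 mulrAC (le_trans cs) // mulrC ler_wpM2r //.
exact: quad_le_l1norm.
Qed.

Definition rayleigh_quotients A : classical_sets.set R :=
  fun r => exists y, sqnorm y != 0 /\ r = quad A y / sqnorm y.

Definition rayleigh_sup A := sup (rayleigh_quotients A).

Section TopEigenvalue.
Variable A : 'M[R]_n.
Hypotheses (sA : sym_mx A) (n_gt0 : (0 < n)%N).

Local Notation mu := (rayleigh_sup A).

Lemma has_sup_rayleigh : classical_sets.has_sup (rayleigh_quotients A).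
Proof.
split; first exists (quad A (fun=> 1) / sqnorm (fun=> 1)), (fun=> 1).
  by rewrite sqnorm1 pnatr_eq0 -lt0n.
exists (mx_l1norm A) => _ [y [y_neq0 ->]].
by rewrite ler_pdivrMr ?quad_le_l1norm // lt_def y_neq0 sqnorm_ge0.
Qed.

Lemma quad_le_rayleigh_sup y : quad A y <= mu * sqnorm y.
Proof.
have [y0|y_neq0] := eqVneq (sqnorm y) 0; first by rewrite quad_sqnorm0 // y0 mulr0.
rewrite -ler_pdivrMr ?(lt_def, y_neq0, sqnorm_ge0) //.
by apply: (sup_upper_bound has_sup_rayleigh); exists y.
Qed.

Lemma rayleigh_sup_psd w : 0 <= quad (mu%:M - A) w.
Proof. by rewrite quad_scalar_sub subr_ge0 quad_le_rayleigh_sup. Qed.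

(* Otherwise quad (mu - A) would be bounded below by a positive multiple of
   sqnorm, and mu would not be the least upper bound of the Rayleigh quotients. *)
Lemma rayleigh_sup_singular : (mu%:M - A) \notin unitmx.
Proof.
apply/negP => unit_muA.
have coercive := psd_unitmx_sqnorm_le (sym_mx_scalar_sub mu sA) rayleigh_sup_psd unit_muA.
set C := mx_l1norm _ in coercive.
have C_gt0 : 0 < C.
  rewrite lt_def mx_l1norm_ge0 andbT; apply/eqP => C0.
  by have := coercive (fun=> 1); rewrite sqnorm1 C0 mul0r leNgt ltr0n n_gt0.
have iC_gt0 : 0 < C^-1 by rewrite invr_gt0.
have [_ [y [y_neq0 ->]]] := sup_adherent iC_gt0 has_sup_rayleigh.
have y_gt0 : 0 < sqnorm y by rewrite lt_def y_neq0 sqnorm_ge0.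
rewrite ltr_pdivlMr // -/(rayleigh_sup A) mulrBl => lt_mu.
have := coercive y; rewrite quad_scalar_sub.
have : C * (mu * sqnorm y - quad A y) < C * (C^-1 * sqnorm y).
  by rewrite ltr_pM2l //; lra.
rewrite mulrA mulfV ?gt_eqF // mul1r; lra.
Qed.

Lemma eigenvalue_rayleigh_sup : eigenvalue A mu.
Proof.
have := rayleigh_sup_singular; rewrite unitmxE unitfE negbK => /det0P [w w_neq0].
rewrite mulmxBr mul_mx_scalar => /eqP; rewrite subr_eq0 => /eqP wA.
by apply/eigenvalueP; exists w.
Qed.

Lemma eigenvalue_le_rayleigh_sup a : eigenvalue A a -> a <= mu.
Proof.
move=> /eigenvalueP [w wA w_neq0]; pose y i := w 0 i.
have col_y j : \sum_i y i * A i j = a * y j.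
  by have /rowP/(_ j) := wA; rewrite !mxE => <-; apply: eq_bigr.
have quad_y : quad A y = a * sqnorm y.
  rewrite /quad /bilin exchange_big /sqnorm mulr_sumr; apply: eq_bigr => j _.
  by rewrite -mulr_suml col_y expr2 mulrA.
have y_gt0 : 0 < sqnorm y.
  rewrite lt_def sqnorm_ge0 andbT; apply: contra w_neq0 => /eqP y0.
  by apply/eqP/rowP => j; rewrite mxE -(sqnorm_eq0 y0 j).
by have := quad_le_rayleigh_sup y; rewrite quad_y ler_pM2r.
Qed.

Lemma rayleigh_sup_eigenvector y :
  quad A y = mu * sqnorm y -> forall i, mxv A y i = mu * y i.
Proof.
move=> y_eq i; set B := mu%:M - A; pose z := mxv B y.
have := psd_cauchy_schwarz z y (sym_mx_scalar_sub mu sA) rayleigh_sup_psd.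
rewrite [quad B y]quad_scalar_sub y_eq subrr mulr0 bilinE.
have -> : \sum_j z j * mxv B y j = sqnorm z by apply: eq_bigr => j _; rewrite expr2.
move=> z_le0; have z0 : sqnorm z = 0.
  by apply/eqP; rewrite -sqrf_eq0 eq_le z_le0 sqr_ge0.
by have /eqP := sqnorm_eq0 z0 i; rewrite /z mxv_scalar_sub subr_eq0 => /eqP.
Qed.

End TopEigenvalue.
End RayleighPrinciple.

Section Set2.
Variable T : finType.
Implicit Types a b c d x y : T.

Lemma set2C x y : [set x; y] = [set y; x].
Proof. exact: setUC. Qed.

Lemma set2_eq_cases x y a b :
  [set x; y] = [set a; b] -> (x = a /\ y = b) \/ (x = b /\ y = a).
Proof.
move=> xy_ab.
have xab : x \in [set a; b] by rewrite -xy_ab set21.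
have yab : y \in [set a; b] by rewrite -xy_ab set22.
have axy : a \in [set x; y] by rewrite xy_ab set21.
have bxy : b \in [set x; y] by rewrite xy_ab set22.
move: xab yab axy bxy; rewrite !in_set2.
by do 4 case/orP=> /eqP ?; subst; auto.
Qed.

Lemma set2_neq x y a b : x != a -> x != b -> [set x; y] != [set a; b].
Proof.
move=> xa xb; apply/eqP => xy_ab; have := set21 x y.
by rewrite xy_ab in_set2 (negbTE xa) (negbTE xb).
Qed.

Variable R : ringType.

Lemma set2_indicatorE i j c d : c != d ->
  (([set i; j] == [set c; d])%:R : R) =
  ((i == c) && (j == d))%:R + ((i == d) && (j == c))%:R.
Proof.
move=> cd.
have [/set2_eq_cases [[-> ->]|[-> ->]]|ij_cd] := eqVneq [set i; j] [set c; d].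
- by rewrite !eqxx (negbTE cd) addr0.
- by rewrite !eqxx eq_sym (negbTE cd) add0r.
- rewrite (_ : (i == c) && (j == d) = false); last first.
    by apply: contraNF ij_cd => /andP [/eqP-> /eqP->].
  rewrite (_ : (i == d) && (j == c) = false) ?addr0 //.
  by apply: contraNF ij_cd => /andP [/eqP-> /eqP->]; rewrite set2C.
Qed.

Lemma sum_set2_indicator i c d (g : T -> R) : c != d ->
  \sum_j (([set i; j] == [set c; d])%:R : R) * g j =
  (i == c)%:R * g d + (i == d)%:R * g c.
Proof.
move=> cd; under eq_bigr => j _ do rewrite set2_indicatorE // mulrDl.
rewrite big_split /= (bigD1 d) // [X in _ + X](bigD1 c) //= !eqxx !andbT.
rewrite !big1 ?addr0 // => j /negbTE ->; by rewrite andbF mul0r.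
Qed.

Lemma sum2_set2_indicator c d (g : T -> T -> R) : c != d ->
  \sum_i \sum_j (([set i; j] == [set c; d])%:R : R) * g i j = g c d + g d c.
Proof.
move=> cd; under eq_bigr => i _ do rewrite sum_set2_indicator //.
rewrite big_split /= (bigD1 c) // [X in _ + X](bigD1 d) //= !eqxx !mul1r.
by rewrite !big1 ?addr0 // => i /negbTE ->; rewrite mul0r.
Qed.

End Set2.

Lemma adj_set2 n (adj : rel 'I_n) a b x w :
  symmetric adj -> adj a b -> [set x; w] = [set a; b] -> adj x w.
Proof. by move=> sym_adj ab /set2_eq_cases [[-> ->]|[-> ->]] //; rewrite sym_adj. Qed.

Lemma adj_neq n (adj : rel 'I_n) a b : irreflexive adj -> adj a b -> a != b.
Proof. by move=> irr_adj ab; apply: contraTneq ab => ->; rewrite irr_adj. Qed.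

Section SignlessLaplacian.
Variables (R : realType) (n : nat).
Implicit Types (adj : rel 'I_n) (y : 'I_n -> R).

Local Notation Q adj := (signless_laplacian R adj).

Lemma deg_sum adj i : ((deg adj i)%:R : R) = \sum_j ((adj i j)%:R : R).
Proof.
rewrite /deg /nbhd -sum1_card natr_sum big_mkcond /=; apply: eq_bigr => j _.
by rewrite inE; case: (adj i j).
Qed.

Lemma mxv_signless adj y i :
  mxv (Q adj) y i = \sum_j ((adj i j)%:R : R) * (y i + y j).
Proof.
rewrite /mxv; under eq_bigr => j _ do rewrite mxE mulrDl.
rewrite big_split /= (bigD1 i) //= big1 ?addr0 => [|j /negbTE]; last first.
  by rewrite eq_sym => ->; rewrite !mul0r.
rewrite eqxx mul1r deg_sum mulr_suml -big_split.
by apply: eq_bigr => j _; rewrite mulrDr.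
Qed.

Lemma sym_signless adj : symmetric adj -> sym_mx (Q adj).
Proof.
by move=> sym_adj i j; rewrite !mxE sym_adj eq_sym; case: eqVneq => [->|]; rewrite ?mul0r.
Qed.

Lemma quad_signless adj y :
  quad (Q adj) y = \sum_i \sum_j ((adj i j)%:R : R) * (y i * (y i + y j)).
Proof.
rewrite /quad bilinE; apply: eq_bigr => i _.
by rewrite mxv_signless mulr_sumr; apply: eq_bigr => j _; ring.
Qed.

Definition rotate adj (a b c d : 'I_n) : rel 'I_n := fun x w =>
  (adj x w && ([set x; w] != [set a; b])) || ([set x; w] == [set c; d]).

Lemma rotate_swap adj a b c d : rotate adj a b d c =2 rotate adj a b c d.
Proof. by move=> x w; rewrite /rotate [[set d; c]]set2C. Qed.

Section Rotation.
Variables (adj : rel 'I_n) (a b c d : 'I_n).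
Hypotheses (sym_adj : symmetric adj) (irr_adj : irreflexive adj).
Hypotheses (ab : adj a b) (not_cd : ~~ adj c d) (c_neq_d : c != d).

Local Notation G' := (rotate adj a b c d).

Lemma rotate_sym : symmetric G'.
Proof. by move=> x w; rewrite /rotate sym_adj set2C. Qed.

Lemma rotate_irr : irreflexive G'.
Proof.
move=> x; rewrite /rotate irr_adj /= setUid; apply/negP => /eqP x_cd.
have := set21 c d; have := set22 c d; rewrite -x_cd !in_set1 => /eqP dx /eqP cx.
by move: c_neq_d; rewrite cx dx eqxx.
Qed.

Lemma rotateE x w : ((G' x w)%:R : R) =
  (adj x w)%:R - ([set x; w] == [set a; b])%:R + ([set x; w] == [set c; d])%:R.
Proof.
rewrite /rotate; case: eqP => [xw_ab|_].
  have xw := adj_set2 sym_adj ab xw_ab.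
  have -> : ([set x; w] == [set c; d]) = false.
    by apply: contraNF not_cd => /eqP xw_cd; apply: adj_set2 sym_adj xw (esym xw_cd).
  by rewrite xw /=; ring.
case: eqP => [xw_cd|_]; last by case: (adj x w) => /=; ring.
have /negbTE-> : ~~ adj x w.
  by apply: contra not_cd => xw; apply: adj_set2 sym_adj xw (esym xw_cd).
by rewrite /=; ring.
Qed.

Lemma mxv_rotate y : c != a -> c != b ->
  mxv (Q G') y c = mxv (Q adj) y c + (y c + y d).
Proof.
move=> ca cb; rewrite !mxv_signless.
under eq_bigr => j _ do rewrite rotateE !mulrDl mulNr.
rewrite !big_split /= sumrN !sum_set2_indicator ?(adj_neq irr_adj ab) //.
by rewrite (negbTE ca) (negbTE cb) (negbTE c_neq_d) eqxx /=; ring.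
Qed.

Lemma quad_rotate y :
  quad (Q G') y = quad (Q adj) y - (y a + y b) ^+ 2 + (y c + y d) ^+ 2.
Proof.
rewrite !quad_signless.
under eq_bigr => i _ do under eq_bigr => j _ do rewrite rotateE !mulrDl mulNr.
rewrite (eq_bigr (fun i => \sum_j (adj i j)%:R * (y i * (y i + y j))
    - \sum_j ([set i; j] == [set a; b])%:R * (y i * (y i + y j))
    + \sum_j ([set i; j] == [set c; d])%:R * (y i * (y i + y j)))); last first.
  by move=> i _; rewrite -sumrB -big_split.
rewrite big_split sumrB /= !(sum2_set2_indicator (fun i j => y i * (y i + y j))) //.
  by ring.
exact: adj_neq irr_adj ab.
Qed.

Lemma edges_rotate : edges G' = [set c; d] |: (edges adj :\ [set a; b]).
Proof.
apply/setP => e; rewrite !inE /is_edge; apply/existsP/idP.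
- case=> x /existsP [w /andP [+ /eqP ->]]; rewrite /rotate.
  case/orP => [/andP [xw ->] | /eqP ->]; last by rewrite eqxx.
  by apply/orP; right; apply/existsP; exists x; apply/existsP; exists w; rewrite xw eqxx.
- case/orP => [/eqP ->|/andP [e_ab /existsP [x /existsP [w /andP [xw /eqP e_xw]]]]].
    by exists c; apply/existsP; exists d; rewrite /rotate !eqxx orbT.
  by exists x; apply/existsP; exists w; rewrite /rotate xw -e_xw e_ab eqxx.
Qed.

Lemma nedges_rotate : nedges G' = nedges adj.
Proof.
have ab_edge : [set a; b] \in edges adj.
  by rewrite inE; apply/existsP; exists a; apply/existsP; exists b; rewrite ab eqxx.
have cd_new : [set c; d] \notin edges adj :\ [set a; b].
  rewrite !inE negb_and orbC; apply/orP; left; apply/existsP => -[x /existsP [w]].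
  case/andP => xw /eqP cd_xw.
  by move: not_cd; rewrite (adj_set2 sym_adj xw cd_xw).
by rewrite /nedges edges_rotate cardsU1 cd_new (cardsD1 [set a; b] (edges adj)) ab_edge.
Qed.

End Rotation.
End SignlessLaplacian.

Lemma card_le_matching_number n (adj : rel 'I_n) M :
  is_matching adj M -> (#|M| <= matching_number adj)%N.
Proof. by move=> M_matching; rewrite /matching_number (bigD1 M) //= leq_maxl. Qed.

Section PairMatchings.
Variables (n k : nat).
Implicit Types (adj : rel 'I_n) (p q : 'I_k -> 'I_n).

Definition disjoint_pairs p q :=
  [/\ injective p, injective q & forall i j, p i != q j].

Definition pairset p q : {set {set 'I_n}} := [set [set p i; q i] | i : 'I_k].

Lemma pair_inj p q : disjoint_pairs p q -> injective (fun i => [set p i; q i]).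
Proof.
move=> [p_inj _ pq] i j /set2_eq_cases [[/p_inj //]|[pi_qj _]].
by have := pq i j; rewrite pi_qj eqxx.
Qed.

Lemma card_pairset p q : disjoint_pairs p q -> #|pairset p q| = k.
Proof. by move=> pq; rewrite card_imset ?card_ord //; exact: pair_inj. Qed.

Lemma is_matching_pairset adj p q :
  (forall i, adj (p i) (q i)) -> disjoint_pairs p q -> is_matching adj (pairset p q).
Proof.
move=> pq_adj pq; have pq_inj := pair_inj pq; case: pq => [p_inj q_inj pq].
apply/andP; split.
  apply/subsetP => _ /imsetP [i _ ->]; rewrite inE.
  by apply/existsP; exists (p i); apply/existsP; exists (q i); rewrite pq_adj eqxx.
apply/forallP => e1; apply/implyP => /imsetP [i _ ->].
apply/forallP => e2; apply/implyP => /imsetP [j _ ->].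
apply/implyP => pairs_neq; have ij_neq : i != j by apply: contraNneq pairs_neq => ->.
rewrite -setI_eq0; apply/eqP/setP => w; rewrite !inE.
apply/negP => /andP [/orP [/eqP->|/eqP->] /orP [/eqP e|/eqP e]].
- by rewrite (p_inj _ _ e) eqxx in ij_neq.
- by have := pq i j; rewrite e eqxx.
- by have := pq j i; rewrite e eqxx.
- by rewrite (q_inj _ _ e) eqxx in ij_neq.
Qed.

Lemma mweight_pairset (R : realType) (X : 'cV[R]_n) p q : disjoint_pairs p q ->
  mweight X (pairset p q) = \sum_i (X (p i) 0 + X (q i) 0) ^+ 2.
Proof.
move=> pq; rewrite /mweight big_imset /= => [|i j _ _]; last exact: pair_inj.
apply: eq_bigr => i _; case: pq => _ _ /(_ i i) pq_neq.
by rewrite big_setU1 /= ?inE // big_set1.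
Qed.

End PairMatchings.

Section ExtremalGraph.
Variables (R : realType) (m beta n : nat) (adj : rel 'I_n) (qs : R) (X : 'cV[R]_n).
Variables (Ms : {set {set 'I_n}}) (u v : 'I_(matching_number adj) -> 'I_n).
Hypotheses (simple_adj : simple_graph adj) (m_adj : nedges adj = m).
Hypothesis beta_le_k : (beta <= matching_number adj)%N.
Hypothesis qs_max : forall (n' : nat) (adj' : rel 'I_n') (r : R),
  simple_graph adj' -> nedges adj' = m -> (beta <= matching_number adj')%N ->
  is_q adj' r -> r <= qs.
Hypotheses (X_principal : principal_eigenvector adj qs X)
  (Ms_extremal : extremal_matching adj X Ms) (uv_proper : proper_ordering X Ms u v).

Local Notation k := (matching_number adj).
Local Notation Q G := (signless_laplacian R G).
Local Notation x := (fun w => X w 0).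

Lemma sym_adj : symmetric adj. Proof. by case: simple_adj. Qed.
Lemma irr_adj : irreflexive adj. Proof. by case: simple_adj. Qed.

Lemma X_ge0 w : 0 <= X w 0. Proof. by case: X_principal. Qed.

Lemma sqnorm_X : sqnorm x = 1. Proof. by case: X_principal => _ []. Qed.

Lemma mxv_X i : mxv (Q adj) x i = qs * X i 0.
Proof.
case: X_principal => _ [_ /matrixP /(_ i 0)]; rewrite !mxE => <-.
by apply: eq_bigr => j _; rewrite mxE.
Qed.

Lemma quad_X : quad (Q adj) x = qs.
Proof.
rewrite /quad bilinE (eq_bigr (fun i => qs * X i 0 ^+ 2)) => [|i _].
  by rewrite -mulr_sumr -[X in qs * X]/(sqnorm x) sqnorm_X mulr1.
by rewrite mxv_X mulrCA expr2.
Qed.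

Section RotationInClass.
Variables (a b c d : 'I_n) (p q : 'I_k -> 'I_n).
Hypotheses (ab : adj a b) (not_cd : ~~ adj c d) (c_neq_d : c != d).
Hypotheses (pq_rot : forall i, rotate adj a b c d (p i) (q i)) (pq : disjoint_pairs p q).

Local Notation G' := (rotate adj a b c d).

Lemma rayleigh_sup_rotate_le : rayleigh_sup (Q G') <= qs.
Proof.
have simple_G' : simple_graph G'.
  by split; [exact: rotate_sym sym_adj | exact: rotate_irr irr_adj c_neq_d].
have beta_le_G' : (beta <= matching_number G')%N.
  apply: leq_trans beta_le_k _; rewrite -(card_pairset pq) card_le_matching_number //.
  exact: is_matching_pairset.
have m_G' : nedges G' = m := etrans (nedges_rotate sym_adj ab not_cd) m_adj.
apply: (qs_max simple_G' m_G' beta_le_G').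
have n_gt0 := leq_ltn_trans (leq0n _) (ltn_ord a).
have sym_Q' := sym_signless R (rotate_sym a b c d sym_adj).
by split; [exact: eigenvalue_rayleigh_sup | exact: eigenvalue_le_rayleigh_sup].
Qed.

Lemma rotation_lt_off_ab : c != a -> c != b ->
  0 < X c 0 + X d 0 -> X c 0 + X d 0 < X a 0 + X b 0.
Proof.
move=> ca cb cd_gt0; have n_gt0 := leq_ltn_trans (leq0n _) (ltn_ord a).
have sym_Q' := sym_signless R (rotate_sym a b c d sym_adj).
have quad_G' := quad_rotate sym_adj irr_adj ab not_cd c_neq_d x.
have := quad_le_rayleigh_sup (Q G') n_gt0 x.
rewrite quad_G' quad_X sqnorm_X mulr1 => quad_le; have mu_le := rayleigh_sup_rotate_le.
have [sq_eq|sq_neq] := eqVneq ((X c 0 + X d 0) ^+ 2) ((X a 0 + X b 0) ^+ 2).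
  have mu_eq : rayleigh_sup (Q G') = qs by apply/eqP; rewrite eq_le mu_le; lra.
  have := rayleigh_sup_eigenvector sym_Q' n_gt0 (y := x).
  rewrite quad_G' sqnorm_X sq_eq mu_eq quad_X mulr1 subrK => /(_ erefl c).
  by rewrite (mxv_rotate sym_adj irr_adj ab not_cd c_neq_d) // mxv_X; lra.
have a0 := X_ge0 a; have b0 := X_ge0 b.
have : (X c 0 + X d 0) ^+ 2 < (X a 0 + X b 0) ^+ 2 by rewrite lt_def eq_sym sq_neq /=; lra.
nra.
Qed.

End RotationInClass.

Lemma rotation_lt a b c d (p q : 'I_k -> 'I_n) :
  adj a b -> ~~ adj c d -> c != d ->
  (forall i, rotate adj a b c d (p i) (q i)) -> disjoint_pairs p q ->
  0 < X c 0 + X d 0 -> X c 0 + X d 0 < X a 0 + X b 0.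
Proof.
move=> ab not_cd cd pq_rot pq cd_gt0.
have [/andP [ca cb]|] := boolP ((c != a) && (c != b)).
  exact: rotation_lt_off_ab ab not_cd cd pq_rot pq ca cb cd_gt0.
rewrite negb_and !negbK => c_ab; have /andP [da db] : (d != a) && (d != b).
  apply: contraNT not_cd; rewrite negb_and !negbK => d_ab; move: cd.
  by case/orP: c_ab => /eqP->; case/orP: d_ab => /eqP->; rewrite ?eqxx // sym_adj.
have not_dc : ~~ adj d c by rewrite sym_adj.
have pq_rot' i : rotate adj a b d c (p i) (q i) by rewrite rotate_swap.
rewrite addrC (rotation_lt_off_ab ab not_dc _ pq_rot' pq da db) 1?addrC //.
by rewrite eq_sym.
Qed.

Lemma Ms_pairset : Ms = pairset u v.
Proof. by case: uv_proper => _ [<-]. Qed.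

Lemma uv_in_Ms i : [set u i; v i] \in Ms.
Proof. by rewrite Ms_pairset; apply/imsetP; exists i. Qed.

Lemma uv_adj i : adj (u i) (v i).
Proof.
case: Ms_extremal => /andP [/andP [/subsetP Ms_edges _] _] _.
have /Ms_edges := uv_in_Ms i.
rewrite inE => /existsP [a /existsP [b /andP [ab /eqP]]].
exact: adj_set2 sym_adj ab.
Qed.

Lemma uv_disjoint : disjoint_pairs u v.
Proof.
have [uv_inj _] := uv_proper.
have disj i j w : i != j -> w \in [set u i; v i] -> w \notin [set u j; v j].
  move=> ij w_i; case: Ms_extremal => /andP [/andP [_ /forallP Ms_disj] _] _.
  have := Ms_disj [set u i; v i]; rewrite uv_in_Ms => /forallP /(_ [set u j; v j]).
  by rewrite uv_in_Ms (inj_eq uv_inj) ij => /disjointFr ->.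
split=> [i j uij|i j vij|i j].
- have [//|ij] := eqVneq i j.
  by have := disj i j (u i) ij (set21 _ _); rewrite uij set21.
- have [//|ij] := eqVneq i j.
  by have := disj i j (v i) ij (set22 _ _); rewrite vij set22.
- have [<-|ij] := eqVneq i j; first exact: adj_neq irr_adj (uv_adj i).
  by apply: contra (disj i j (u i) ij (set21 _ _)) => /eqP->; rewrite set22.
Qed.

Lemma u_inj : injective u. Proof. by case: uv_disjoint. Qed.
Lemma v_inj : injective v. Proof. by case: uv_disjoint. Qed.

Lemma matched_index_neq w i j :
  w = u i \/ w = v i -> w != u j -> w != v j -> i != j.
Proof. by move=> [->|->] w_u w_v; [apply: contraNneq w_u | apply: contraNneq w_v] => ->. Qed.

Lemma X_uv i : X (u i) 0 <= X (v i) 0.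
Proof. by case: uv_proper => _ [_ []]. Qed.

Lemma X_v_nonincr (i j : 'I_k) : (i <= j)%N -> X (v j) 0 <= X (v i) 0.
Proof.
case: uv_proper => _ [_ [_ [v_step _]]].
move=> /subnKC; move: (j - i)%N => t; elim: t j => [|t IHt] j j_eq.
  by rewrite (_ : j = i) //; apply: ord_inj; rewrite -j_eq addn0.
have lt_k : (i + t < k)%N by have := ltn_ord j; lia.
apply: le_trans (IHt (Ordinal lt_k) erefl); apply: v_step.
by rewrite /= -j_eq addnS.
Qed.

Lemma X_adj_eq0 w y : X w 0 = 0 -> adj w y -> X y 0 = 0.
Proof.
move=> w0 wy; have := mxv_X w; rewrite mxv_signless /= w0 mulr0 => /eqP.
rewrite psumr_eq0 => [/allP/(_ y (mem_index_enum _))|j _]; last first.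
  by rewrite mulr_ge0 ?ler0n // add0r X_ge0.
by rewrite wy mul1r add0r => /eqP.
Qed.

Lemma matched_or_free w :
  (exists i, w = u i \/ w = v i) \/ (forall i, w != u i /\ w != v i).
Proof.
case: (boolP [exists i, (w == u i) || (w == v i)]).
  by case/existsP => i /orP [/eqP->|/eqP->]; left; exists i; [left | right].
by move/existsPn => free; right => i; have := free i; rewrite negb_or => /andP.
Qed.

(* Swapping z for u i either gives a heavier maximum matching or, when z v i is
   not an edge, a rotation of u i v i onto z v i. *)
Lemma X_free_le_u z : (forall i, z != u i /\ z != v i) -> forall i, X z 0 <= X (u i) 0.
Proof.
move=> z_free i; rewrite leNgt; apply/negP => ui_lt_z.
pose p := [eta u with i |-> z].
have [u_inj v_inj uv_neq] := uv_disjoint.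
have pv : disjoint_pairs p v.
  split=> [j1 j2|//|j j'].
  - rewrite /p /=; case: eqVneq => [->|j1i]; case: eqVneq => [->|j2i] //.
    + by move=> z_u; have [/eqP] := z_free j2.
    + by move=> u_z; have [/eqP] := z_free j1; rewrite u_z.
    + exact: u_inj.
  - by rewrite /p /=; case: (eqVneq j i) => _; [exact: (z_free j').2 | exact: uv_neq].
have vi0 := X_ge0 (v i); have ui0 := X_ge0 (u i).
have [zv|not_zv] := boolP (adj z (v i)).
  have pv_adj j : adj (p j) (v j).
    by rewrite /p /=; case: eqVneq => [->|_]; [exact: zv | exact: uv_adj].
  have pv_max : is_max_matching adj (pairset p v).
    by rewrite /is_max_matching is_matching_pairset // card_pairset // eqxx.
  case: Ms_extremal => _ /(_ _ pv_max); rewrite Ms_pairset !mweight_pairset //.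
  rewrite (bigD1 i) // [X in _ <= X](bigD1 i) //=.
  under eq_bigr => j /negbTE ji do rewrite /p /= ji.
  by rewrite /p /= eqxx; nra.
have pv_rot j : rotate adj (u i) (v i) z (v i) (p j) (v j).
  rewrite /rotate /p /=; case: eqVneq => [->|ji]; first by rewrite eqxx orbT.
  by rewrite uv_adj (inj_eq (pair_inj uv_disjoint)) ji.
have := rotation_lt (uv_adj i) not_zv (z_free i).2 pv_rot pv; lra.
Qed.

Section TopPairs.
Variables k1 k2 : 'I_k.
Hypotheses (k1_0 : val k1 = 0%N) (k2_1 : val k2 = 1%N).

Local Notation u1 := (u k1).
Local Notation v1 := (v k1).
Local Notation u2 := (u k2).
Local Notation v2 := (v k2).

Lemma k1_neq_k2 : k1 != k2.
Proof. by rewrite -val_eqE /= k1_0 k2_1. Qed.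

Lemma X_le_v1 w : X w 0 <= X v1 0.
Proof.
have v_le_v1 i : X (v i) 0 <= X v1 0 by apply: X_v_nonincr; rewrite k1_0.
have [[i [->|->]]|w_free] := matched_or_free w; [exact: le_trans (X_uv i) _ | by [] |].
exact: le_trans (X_free_le_u w_free k1) (X_uv k1).
Qed.

Lemma X_v1_gt0 : 0 < X v1 0.
Proof.
rewrite lt_def X_ge0 andbT; apply/eqP => v1_0; have := sqnorm_X.
rewrite /sqnorm big1 => [/esym/eqP|w _]; first by rewrite oner_eq0.
by apply/eqP; rewrite sqrf_eq0 eq_le -{1}v1_0 X_le_v1 X_ge0.
Qed.

Lemma X_le_v2 w : w != v1 -> w != u1 -> X w 0 <= X v2 0.
Proof.
move=> w_v1 w_u1; have [[i wi]|w_free] := matched_or_free w; last first.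
  exact: le_trans (X_free_le_u w_free k2) (X_uv k2).
have vi_le_v2 : X (v i) 0 <= X v2 0.
  apply: X_v_nonincr; have := matched_index_neq wi w_u1 w_v1.
  by rewrite -val_eqE /= k1_0 k2_1 lt0n.
by case: wi => ->; [exact: le_trans (X_uv i) vi_le_v2 | exact: vi_le_v2].
Qed.

Lemma X_outer_le w : [&& w != u1, w != v1, w != u2 & w != v2] ->
  (forall i, X w 0 <= X (u i) 0) \/ exists i : 'I_k, (1 < i)%N /\ X w 0 <= X (v i) 0.
Proof.
case/and4P => w_u1 w_v1 w_u2 w_v2.
have [[i wi]|w_free] := matched_or_free w; last by left; exact: X_free_le_u.
right; exists i; split; last by case: wi => ->; [exact: X_uv | exact: lexx].
have := matched_index_neq wi w_u1 w_v1; have := matched_index_neq wi w_u2 w_v2.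
by rewrite -!val_eqE /= k1_0 k2_1; lia.
Qed.

Lemma uv_tperm_disjoint : disjoint_pairs u (v \o tperm k1 k2).
Proof.
have [_ _ uv_neq] := uv_disjoint.
by split=> [|i j /v_inj /perm_inj //|i j]; [exact: u_inj | exact: uv_neq].
Qed.

Lemma adj_u2v1 : adj u1 v2 -> adj u2 v1.
Proof.
move=> u1v2; apply: contraT => not_u2v1.
have [_ _ uv_neq] := uv_disjoint.
have u1_u2 : u1 != u2 by rewrite (inj_eq u_inj) k1_neq_k2.
have tperm_rot j : rotate adj u2 v2 v1 u2 (u j) (v (tperm k1 k2 j)).
  rewrite /rotate; have [->|j_k1] := eqVneq j k1.
    by rewrite tpermL u1v2 set2_neq ?uv_neq.
  have [->|j_k2] := eqVneq j k2; first by rewrite tpermR set2C eqxx orbT.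
  have -> : tperm k1 k2 j = j by apply: tpermD; rewrite eq_sym.
  by rewrite uv_adj (inj_eq (pair_inj uv_disjoint)) j_k2.
have := rotation_lt (uv_adj k2) _ _ tperm_rot uv_tperm_disjoint.
rewrite sym_adj not_u2v1 eq_sym uv_neq => /(_ isT isT).
have := X_v1_gt0; have := X_ge0 u2; have := X_le_v1 v2; lra.
Qed.

Section E2Edge.
Variables a b : 'I_n.
Hypotheses (ab : adj a b) (a_v1 : a != v1) (b_v1 : b != v1).
Hypothesis ab_notin_Ms : forall i, [set a; b] != [set u i; v i].

Lemma rotation_lt_ab c d : ~~ adj c d -> c != d ->
  0 < X c 0 + X d 0 -> X c 0 + X d 0 < X a 0 + X b 0.
Proof.
move=> not_cd cd cd_gt0; apply: rotation_lt ab not_cd cd _ uv_disjoint cd_gt0 => i.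
by rewrite /rotate uv_adj eq_sym ab_notin_Ms.
Qed.

Lemma adj_v1v2 : adj v1 v2.
Proof.
apply: contraT => not_v1v2.
have v1_v2 : v1 != v2 by rewrite (inj_eq v_inj) k1_neq_k2.
have := X_v1_gt0; have := X_ge0 v2 => v2_ge0 v1_gt0.
have := rotation_lt_ab not_v1v2 v1_v2 (ltr_wpDr v2_ge0 v1_gt0).
have := X_le_v1 a; have := X_le_v1 b.
have [a_u1|a_u1] := eqVneq a u1.
  have b_u1 : b != u1 by rewrite -a_u1 eq_sym (adj_neq irr_adj ab).
  by have := X_le_v2 b_v1 b_u1; lra.
by have := X_le_v2 a_v1 a_u1; lra.
Qed.

Lemma X_v2_gt0 : 0 < X v2 0.
Proof.
rewrite lt_def X_ge0 andbT; apply/eqP => v2_0.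
by have := X_adj_eq0 v2_0 (etrans (sym_adj _ _) adj_v1v2); have := X_v1_gt0; lra.
Qed.

Section NoCrossEdge.
Hypothesis not_u1v2 : ~~ adj u1 v2.

Lemma X_u1v2_lt : X u1 0 + X v2 0 < X a 0 + X b 0.
Proof.
have [_ _ uv_neq] := uv_disjoint.
apply: rotation_lt_ab not_u1v2 (uv_neq _ _) _.
by have := X_v2_gt0; have := X_ge0 u1; lra.
Qed.

Lemma E2_edge_avoids_u1 : (a != u1) && (b != u1).
Proof.
have ab_neq := adj_neq irr_adj ab; have lt_ab := X_u1v2_lt.
apply/andP; split; apply/eqP => e.
- have b_u1 : b != u1 by rewrite -e eq_sym.
  by have := X_le_v2 b_v1 b_u1; rewrite e in lt_ab; lra.
- have a_u1 : a != u1 by rewrite -e.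
  by have := X_le_v2 a_v1 a_u1; rewrite e in lt_ab; lra.
Qed.

Lemma E2_edge_outer_end : exists w w', X a 0 + X b 0 = X w 0 + X w' 0 /\
  [&& w != u1, w != v1, w != u2 & w != v2] /\ w' != v1 /\ w' != u1.
Proof.
have /andP [a_u1 b_u1] := E2_edge_avoids_u1.
have [a_u2v2|] := boolP ((a == u2) || (a == v2)); last first.
  by rewrite negb_or => /andP [a_u2 a_v2]; exists a, b; rewrite a_u1 a_v1 a_u2 a_v2.
have [b_u2v2|] := boolP ((b == u2) || (b == v2)); last first.
  by rewrite negb_or => /andP [b_u2 b_v2]; exists b, a; rewrite addrC b_u1 b_v1 b_u2 b_v2.
have := ab_notin_Ms k2; have := adj_neq irr_adj ab.
by case/orP: a_u2v2 => /eqP->; case/orP: b_u2v2 => /eqP->; rewrite ?eqxx // set2C eqxx.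
Qed.

Lemma k_gt2 : (2 < k)%N.
Proof.
rewrite ltnNge; apply/negP => k_le2.
have [w [w' [ab_eq [w_outer [w'_v1 w'_u1]]]]] := E2_edge_outer_end.
have w_le_u1 : X w 0 <= X u1 0.
  by case: (X_outer_le w_outer) => [//|[i [i_gt1 _]]]; have := ltn_ord i; lia.
by have := X_u1v2_lt; have := X_le_v2 w'_v1 w'_u1; rewrite ab_eq; lra.
Qed.

Section ThirdPair.
Variable k3 : 'I_k.
Hypothesis k3_2 : val k3 = 2%N.

Lemma Xab_le_v2v3 : X a 0 + X b 0 <= X v2 0 + X (v k3) 0.
Proof.
have [w [w' [-> [w_outer [w'_v1 w'_u1]]]]] := E2_edge_outer_end.
have w_le_v3 : X w 0 <= X (v k3) 0.
  case: (X_outer_le w_outer) => [/(_ k3) w_le|[i [i_gt1 w_le]]].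
    exact: le_trans w_le (X_uv k3).
  by apply: le_trans w_le (X_v_nonincr _); rewrite k3_2.
by have := X_le_v2 w'_v1 w'_u1; lra.
Qed.

Lemma adj_v2v3 : adj v2 (v k3).
Proof.
apply: contraT => not_v2v3.
have v2_v3 : v2 != v k3 by rewrite (inj_eq v_inj) -val_eqE /= k2_1 k3_2.
have := X_v2_gt0; have := X_ge0 (v k3) => v3_ge0 v2_gt0.
have := rotation_lt_ab not_v2v3 v2_v3 (ltr_wpDr v3_ge0 v2_gt0).
by have := Xab_le_v2v3; lra.
Qed.

Lemma adj_v1v3 : adj v1 (v k3).
Proof.
apply: contraT => not_v1v3.
have v1_v3 : v1 != v k3 by rewrite (inj_eq v_inj) -val_eqE /= k1_0 k3_2.
have := X_v1_gt0; have := X_ge0 (v k3) => v3_ge0 v1_gt0.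
have := rotation_lt_ab not_v1v3 v1_v3 (ltr_wpDr v3_ge0 v1_gt0).
have := Xab_le_v2v3; have : X v2 0 <= X v1 0 by apply: X_le_v1.
lra.
Qed.

End ThirdPair.
End NoCrossEdge.

Lemma E2_edge_H1_or_H2 :
  (adj u1 v2 && adj u2 v1 && adj v1 v2)
  \/ (exists k3 : 'I_k, val k3 = 2%N /\ adj v1 v2 && adj v2 (v k3) && adj v1 (v k3)).
Proof.
have [u1v2|not_u1v2] := boolP (adj u1 v2).
  by left; rewrite adj_v1v2 adj_u2v1.
right; pose k3 := Ordinal (k_gt2 not_u1v2); have k3_2 : val k3 = 2%N by [].
by exists k3; rewrite k3_2 adj_v1v2 (adj_v2v3 not_u1v2 k3_2) (adj_v1v3 not_u1v2 k3_2).
Qed.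

End E2Edge.

Lemma E2_edge_exists :
  edges adj :\: (Ms :|: [set [set v1; w] | w in nbhd adj v1]) != set0 ->
  exists a b, [/\ adj a b, a != v1, b != v1 & forall i, [set a; b] != [set u i; v i]].
Proof.
case/set0Pn => e; rewrite !inE negb_or => /andP [/andP [e_Ms e_v1]].
case/existsP => a /existsP [b /andP [ab /eqP e_ab]]; subst e.
exists a, b; split=> // [||i]; last by apply: contraNneq e_Ms => ->; exact: uv_in_Ms.
- by apply: contraNneq e_v1 => a_eq; apply/imsetP; exists b; rewrite ?inE -a_eq.
- apply: contraNneq e_v1 => b_eq; apply/imsetP; exists a; rewrite ?inE -b_eq.
    by rewrite sym_adj.
  exact: set2C.
Qed.

Lemma H1_or_H2 :
  let E1 := Ms :|: [set [set v1; w] | w in nbhd adj v1] in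
  let E2 := edges adj :\: E1 in
  E2 != set0 ->
  (adj u1 v2 && adj u2 v1 && adj v1 v2)
  \/ (exists k3 : 'I_k, val k3 = 2%N /\ adj v1 v2 && adj v2 (v k3) && adj v1 (v k3)).
Proof.
move=> E1 E2 /E2_edge_exists [a [b [ab a_v1 b_v1 ab_notin_Ms]]].
exact: E2_edge_H1_or_H2 ab a_v1 b_v1 ab_notin_Ms.
Qed.

End TopPairs.
End ExtremalGraph.

Theorem lemma2p4 (R : realType) (m beta : nat) (n : nat) (adj : rel 'I_n)
    (qs : R) (X : 'cV[R]_n) (Ms : {set {set 'I_n}})
    (u v : 'I_(matching_number adj) -> 'I_n) :
  (1 <= beta)%N -> (beta <= m)%N ->
  (* G* lies in G_{m, >= beta} *)
  simple_graph adj -> nedges adj = m -> (beta <= matching_number adj)%N ->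
  (* q(G* ) = qs *)
  is_q adj qs ->
  (* G* has maximum q over G_{m, >= beta} *)
  (forall (n' : nat) (adj' : rel 'I_n') (r : R),
      simple_graph adj' -> nedges adj' = m -> (beta <= matching_number adj')%N ->
      is_q adj' r -> r <= qs) ->
  principal_eigenvector adj qs X ->
  extremal_matching adj X Ms ->
  proper_ordering X Ms u v ->
  forall (k1 k2 : 'I_(matching_number adj)), val k1 = 0%N -> val k2 = 1%N ->
  let E1 := Ms :|: [set [set v k1; w] | w in nbhd adj (v k1)] in
  let E2 := edges adj :\: E1 in
  E2 != set0 ->
  (adj (u k1) (v k2) && adj (u k2) (v k1) && adj (v k1) (v k2))
  \/ (exists k3 : 'I_(matching_number adj), val k3 = 2%N /\
        adj (v k1) (v k2) && adj (v k2) (v k3) && adj (v k1) (v k3)).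
Proof.
move=> _ _ simple_adj m_adj beta_le_k _ qs_max X_principal Ms_extremal uv_proper.
move=> k1 k2 k1_0 k2_1.
exact: (H1_or_H2 simple_adj m_adj beta_le_k qs_max X_principal Ms_extremal uv_proper
  k1_0 k2_1).
Qed.
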